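(* Let $\mathbf M=(\mathbb X,\mathbb U,\mathbb Y,x_0,\mathbf t,h)$ and $\widehat{\mathbf M}=(\hat{\mathbb X},\hat{\mathbb U},\mathbb Y,\hat x_0,\hat{\mathbf t},\hat h)$ be gMDPs with $\mathbf M\preceq^\delta_\epsilon\widehat{\mathbf M}$ via a relation $\mathcal R\subseteq\mathbb X\times\hat{\mathbb X}$, and let $\psi$ be an scLTL formula with DFA $\mathcal A_\psi=(Q,q_0,\Sigma,F,\tau)$. If $\hat V:\hat{\mathbb X}\times Q\to[0,1]$ and $V:\mathbb X\times Q\to[0,1]$ satisfy $\hat V(\hat x,q)\ge V(x,q)$ for all $(x,\hat x)\in\mathcal R$ and $q\in Q$, then $$\mathbf T^*_{-\epsilon,-\delta}(\hat V)(\hat x,q)\ge\mathbf T^*(V)(x,q)\qquad\forall(x,\hat x)\in\mathcal R,\ q\in Q.$$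
   Context: A gMDP is $(\mathbb X,\mathbb U,\mathbb Y,x_0,\mathbf t,h)$ with Polish state/input spaces, output space $\mathbb Y$ with metric $\mathbf d_{\mathbb Y}$, initial state, stochastic kernel $\mathbf t(\cdot\mid x,u)$ and measurable output map $h$. $\mathbf M\preceq^\delta_\epsilon\widehat{\mathbf M}$ means there exist an interface $\mathcal U_v:\mathbb U\times\mathbb X\times\hat{\mathbb X}\to\mathcal P(\hat{\mathbb U})$, a measurable relation $\mathcal R\subseteq\mathbb X\times\hat{\mathbb X}$ and a Borel kernel $\mathbb W_{\mathbf t}(\cdot\mid u,x,\hat x)$ on $\mathbb X\times\hat{\mathbb X}$ with $(x_0,\hat x_0)\in\mathcal R$ and, for all $(x,\hat x)\in\mathcal R$: $\mathbf d_{\mathbb Y}(h(x),\hat h(\hat x))\le\epsilon$, and for all $u\in\mathbb U$, $\mathbb W=\mathbb W_{\mathbf t}(\cdot\mid u,x,\hat x)$ has marginals $\mathbf t(\cdot\mid x,u)$ on $\mathbb X$ and $\hat{\mathbf t}(\cdot\mid\hat x,\mathcal U_v(u,x,\hat x))$ on $\hat{\mathbb X}$, and $\mathbb W(\mathcal R)\ge1-\delta$. $\Sigma=2^{\mathsf{AP}}$, $\mathsf L:\mathbb Y\to\Sigma$ measurable labelling, $\mathcal A_\psi$ a DFA (accepting set $F$, transition $\tau:Q\times\Sigma\to Q$) for $\psi$. For the product $\mathbf M\otimes\mathcal A_\psi$ (states $\mathbb X\times Q$, kernel $\bar{\mathbf t}(dx'\times\{q'\}\mid x,q,u)=\mathbf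 1_{\{q'\}}(\tau(q,\mathsf L(h(x'))))\mathbf t(dx'\mid x,u)$): $\mathbf T^\nu(V)(x,q)=\int\max\{\mathbf 1_F(q'),V(x',q')\}\bar{\mathbf t}(dx'\times\{q'\}\mid x,q,\nu(x,q))$ and $\mathbf T^*(V)=\sup_\nu\mathbf T^\nu(V)$ over policies $\nu:\mathbb X\times Q\to\mathcal P(\mathbb U)$. With $\mathcal N_\epsilon(y)=\{y'\in\mathbb Y:\mathbf d_{\mathbb Y}(y',y)\le\epsilon\}$ and $\bar\tau(q,\hat x')=\{\tau(q,\alpha):\alpha\in\mathsf L(\mathcal N_\epsilon(\hat h(\hat x')))\}$, the optimistic operator is $\mathbf T^*_{-\epsilon,-\delta}(\hat V)(\hat x,q)=\sup_\mu\mathbf L\big(\int_{\hat{\mathbb X}}\max_{q'\in\bar\tau(q,\hat x')}\max\{\mathbf 1_F(q'),\hat V(\hat x',q')\}\,\hat{\mathbf t}(d\hat x'\mid\hat x,\mu)+\delta\big)$, the supremum over inputs/input distributions $\mu$ of $\widehat{\mathbf M}$, with $\mathbf L(r)=\min(1,\max(0,r))$. *)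

From HB Require Import structures.
From mathcomp Require Import all_boot all_order all_algebra.
From mathcomp Require Import all_classical all_reals all_analysis measurable_realfun.
Set Implicit Arguments. Unset Strict Implicit. Unset Printing Implicit Defensive.
Import Order.TTheory GRing.Theory Num.Theory.
Local Open Scope classical_set_scope.
Local Open Scope ring_scope.

Definition is_metric (R : realType) (Y : Type) (dY : Y -> Y -> R) : Prop :=
  [/\ forall y y', 0 <= dY y y',
      forall y y', dY y y' = 0 <-> y = y',
      forall y y', dY y y' = dY y' y
    & forall y y' y'', dY y y'' <= dY y y' + dY y' y''].

(* Approximate probabilistic relation  M <=^delta_eps Mh  witnessed by the
   interface Uv, the measurable relation Rel and the lifted kernel W.
   t : stochastic kernel on X given X * U;  th : on Xh given Xh * Uh.
   The Mh-kernel under an input distribution mu is the mixture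
   B |-> \int[mu]_uh th (xh, uh) B. *)
Definition approx_sim (R : realType)
    (dX dU dXh dUh : measure_display)
    (X : measurableType dX) (U : measurableType dU)
    (Xh : measurableType dXh) (Uh : measurableType dUh) (Y : Type)
    (dY : Y -> Y -> R)
    (x0 : X) (t : R.-pker (X * U) ~> X) (h : X -> Y)
    (xh0 : Xh) (th : R.-pker (Xh * Uh) ~> Xh) (hh : Xh -> Y)
    (eps delta : R)
    (Uv : U -> X -> Xh -> probability Uh R)
    (Rel : set (X * Xh)%type)
    (W : R.-pker (U * X * Xh)%type ~> (X * Xh)%type) : Prop :=
  [/\ measurable Rel,
      Rel (x0, xh0)
    & forall x xh, Rel (x, xh) ->
        dY (h x) (hh xh) <= eps /\
        forall u : U,
          [/\ forall A, measurable A -> W (u, x, xh) (A `*` [set: _]) = t (x, u) A,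
              forall B, measurable B ->
                W (u, x, xh) ([set: _] `*` B) = (\int[Uv u x xh]_uh th (xh, uh) B)%E
            & ((1 - delta)%:E <= W (u, x, xh) Rel)%E]].

Definition indF (Q : finType) (F : {set Q}) (q : Q) (R : realType) : R :=
  (q \in F)%:R.

Definition prod_integrand (R : realType) (dX : measure_display)
    (X : measurableType dX) (Y : Type) (AP Q : finType)
    (h : X -> Y) (L : Y -> {set AP}) (tau : Q -> {set AP} -> Q) (F : {set Q})
    (V : X -> Q -> R) (q : Q) (x' : X) : \bar R :=
  let q' := tau q (L (h x')) in (Num.max (indF F q' R) (V x' q'))%:E.

Definition Tnu (R : realType) (dX dU : measure_display)
    (X : measurableType dX) (U : measurableType dU) (Y : Type) (AP Q : finType)
    (t : R.-pker (X * U) ~> X) (h : X -> Y) (L : Y -> {set AP})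
    (tau : Q -> {set AP} -> Q) (F : {set Q})
    (nu : X -> Q -> probability U R) (V : X -> Q -> R) (x : X) (q : Q) : \bar R :=
  (\int[nu x q]_u \int[t (x, u)]_x' prod_integrand h L tau F V q x')%E.

Definition Tstar (R : realType) (dX dU : measure_display)
    (X : measurableType dX) (U : measurableType dU) (Y : Type) (AP Q : finType)
    (t : R.-pker (X * U) ~> X) (h : X -> Y) (L : Y -> {set AP})
    (tau : Q -> {set AP} -> Q) (F : {set Q})
    (V : X -> Q -> R) (x : X) (q : Q) : \bar R :=
  ereal_sup [set Tnu t h L tau F nu V x q | nu in
                [set: X -> Q -> probability U R]].

Definition Neps (R : realType) (Y : Type) (dY : Y -> Y -> R) (eps : R) (y : Y)
  : set Y := [set y' | dY y' y <= eps].

Definition taubar (R : realType) (Y : Type) (dY : Y -> Y -> R) (eps : R)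
    (AP Q : finType) (Xh : Type) (hh : Xh -> Y) (L : Y -> {set AP})
    (tau : Q -> {set AP} -> Q) (q : Q) (xh' : Xh) : set Q :=
  [set tau q a | a in L @` Neps dY eps (hh xh')].

Definition opt_integrand (R : realType) (dXh : measure_display)
    (Xh : measurableType dXh) (Y : Type) (dY : Y -> Y -> R) (eps : R)
    (AP Q : finType) (hh : Xh -> Y) (L : Y -> {set AP})
    (tau : Q -> {set AP} -> Q) (F : {set Q})
    (Vh : Xh -> Q -> R) (q : Q) (xh' : Xh) : \bar R :=
  ereal_sup [set (Num.max (indF F q' R) (Vh xh' q'))%:E | q' in
                taubar dY eps hh L tau q xh'].

Definition clamp01 (R : realType) (r : \bar R) : \bar R :=
  Order.min 1%E (Order.max 0%E r).

Definition Tstar_opt (R : realType) (dXh dUh : measure_display)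
    (Xh : measurableType dXh) (Uh : measurableType dUh) (Y : Type)
    (dY : Y -> Y -> R) (eps delta : R) (AP Q : finType)
    (th : R.-pker (Xh * Uh) ~> Xh) (hh : Xh -> Y) (L : Y -> {set AP})
    (tau : Q -> {set AP} -> Q) (F : {set Q})
    (Vh : Xh -> Q -> R) (xh : Xh) (q : Q) : \bar R :=
  ereal_sup [set clamp01
                 ((\int[mu]_uh \int[th (xh, uh)]_xh'
                     opt_integrand dY eps hh L tau F Vh q xh') + delta%:E)%E
             | mu in [set: probability Uh R]].

From HB Require Import structures.
From mathcomp Require Import all_boot all_order all_algebra.
From mathcomp Require Import all_classical all_reals all_analysis measurable_realfun.
Set Implicit Arguments. Unset Strict Implicit. Unset Printing Implicit Defensive.
Import Order.TTheory GRing.Theory Num.Theory.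
Local Open Scope classical_set_scope.
Local Open Scope ring_scope.

(* Fix an input u of M at a related pair (x, xh).  The lifted kernel W(u,x,xh)
   couples t(.|x,u) with the Uv(u,x,xh)-mixture of th(.|xh,.) and gives the
   relation mass at least 1 - delta.  For related successors (x', xh') the
   output of x' lies in the eps-neighbourhood of the output of xh', so the
   automaton state reached from x' is one of the optimistic successors of xh';
   as V <= Vh on the relation, the integrand of T is dominated there by the
   optimistic integrand, and it is at most 1 elsewhere.  Integrating against W
   bounds the value of u by the optimistic value of Uv(u,x,xh) plus delta, and
   by 1, hence by the clamped operator; averaging over a policy keeps the
   bound. *)

Lemma measurable_fun_finite_select d d' (T : measurableType d)
    (T' : measurableType d') (I : finType) (k : T -> I) (G : I -> T -> T') :
  (forall i, measurable (k @^-1` [set i])) ->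
  (forall i, measurable_fun [set: T] (G i)) ->
  measurable_fun [set: T] (fun x => G (k x) x).
Proof.
move=> mk mG _ B mB; rewrite setTI.
have -> : (fun x => G (k x) x) @^-1` B =
    \big[setU/set0]_(i <- enum I) (k @^-1` [set i] `&` G i @^-1` B).
  apply/seteqP; split => x; rewrite -bigcup_seq.
    by move=> Bx; exists (k x) => //=; rewrite mem_enum.
  by case=> i _ [/= <-].
apply: bigsetU_measurable => i _; apply: measurableI => //.
by rewrite -[_ @^-1` _]setTI; exact: mG.
Qed.

Section marginals.
Context (R : realType) d1 d2 (T1 : measurableType d1) (T2 : measurableType d2).
Variable w : {measure set (T1 * T2) -> \bar R}.

Lemma ge0_integral_marginal_fst (m : {measure set T1 -> \bar R})
    (f : T1 -> \bar R) :
  (forall A, measurable A -> w (A `*` [set: T2]) = m A) ->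
  (forall x, 0 <= f x)%E -> measurable_fun [set: T1] f ->
  (\int[m]_x f x = \int[w]_p f p.1)%E.
Proof.
move=> wm f0 mf; rewrite (eq_measure_integral (pushforward w fst)).
  by rewrite ge0_integral_pushforward.
by move=> A mA _; rewrite /pushforward -wm// setXT.
Qed.

Lemma ge0_integral_marginal_snd (m : {measure set T2 -> \bar R})
    (f : T2 -> \bar R) :
  (forall B, measurable B -> w ([set: T1] `*` B) = m B) ->
  (forall y, 0 <= f y)%E -> measurable_fun [set: T2] f ->
  (\int[m]_y f y = \int[w]_p f p.2)%E.
Proof.
move=> wm f0 mf; rewrite (eq_measure_integral (pushforward w snd)).
  by rewrite ge0_integral_pushforward.
by move=> B mB _; rewrite /pushforward -wm// setTX.
Qed.

End marginals.

(* The mixture [B |-> \int[P]_u k (t, u) B] is the composition of the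
   constant kernel [P] with [k], evaluated at [t]. *)
Lemma ge0_integral_snd_mixture (R : realType) d d1 dU dX (T : measurableType d)
    (T1 : measurableType d1) (U : measurableType dU) (X : measurableType dX)
    (w : {measure set (T1 * X) -> \bar R}) (k : R.-sfker (T * U) ~> X) (t : T)
    (P : probability U R) (f : X -> \bar R) :
  (forall B, measurable B -> w ([set: T1] `*` B) = \int[P]_u k (t, u) B)%E ->
  (forall x, 0 <= f x)%E -> measurable_fun [set: X] f ->
  (\int[w]_p f p.2 = \int[P]_u \int[k (t, u)]_x f x)%E.
Proof.
move=> wP f0 mf.
pose l := kprobability (@measurable_cst _ _ T (pprobability U R) [set: T] P).
rewrite -(integral_kcomp l k t f0 mf).
by rewrite -(ge0_integral_marginal_snd (m := mkcomp l k t)).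
Qed.

Section unit_mass.
Local Open Scope ereal_scope.
Context (R : realType) d (T : measurableType d) (mu : {measure set T -> \bar R}).
Hypothesis mu1 : mu [set: T] = 1.

Lemma ge0_integral_le_bound (f : T -> \bar R) (M : \bar R) :
  (forall x, 0 <= f x) -> measurable_fun [set: T] f ->
  (forall x, f x <= M) -> \int[mu]_x f x <= M.
Proof.
move=> f0 mf fM; apply: (@le_trans _ _ (\int[mu]_x cst M x)).
  exact: ge0_le_integral.
by rewrite integral_cst// mu1 mule1.
Qed.

Lemma measure_setC_le (S : set T) (delta : R) : measurable S ->
  (1 - delta)%:E <= mu S -> mu (~` S) <= delta%:E.
Proof.
move=> mS muS.
have muT : mu [set: T] < +oo by rewrite mu1 ltry.
have muS_fin : mu S \is a fin_num.
  by rewrite ge0_fin_numE// (le_lt_trans (le_measure mu _ _ (subsetT S))) ?inE.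
rewrite -setTD measureD ?setTI// -[X in X - _]/(mu [set: T]) mu1.
by rewrite lee_subel_addr// -lee_subel_addl// -EFinB.
Qed.

End unit_mass.

Lemma coupling_integral_le (R : realType) d1 d2 (T1 : measurableType d1)
    (T2 : measurableType d2) (w : {measure set (T1 * T2) -> \bar R})
    (mu : {measure set T1 -> \bar R}) (S : set (T1 * T2)) (delta : R)
    (f : T1 -> \bar R) (g : T2 -> \bar R) :
  w [set: T1 * T2] = 1%E ->
  (forall A, measurable A -> w (A `*` [set: T2]) = mu A) ->
  measurable S -> ((1 - delta)%:E <= w S)%E ->
  (forall x, 0 <= f x <= 1)%E -> measurable_fun [set: T1] f ->
  (forall y, 0 <= g y)%E -> measurable_fun [set: T2] g ->
  (forall x y, S (x, y) -> f x <= g y)%E ->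
  (\int[mu]_x f x <= \int[w]_p g p.2 + delta%:E)%E.
Proof.
move=> w1 wmu mS wS f01 mf g0 mg fg.
have f0 x : (0 <= f x)%E by case/andP: (f01 x).
have mgsnd : measurable_fun [set: T1 * T2] (fun p => g p.2).
  exact: measurableT_comp mg measurable_snd.
have mSC : measurable_fun [set: T1 * T2] (fun p => (\1_(~` S) p : R)%:E).
  by apply/measurable_EFinP; exact/measurable_indic/measurableC.
rewrite (ge0_integral_marginal_fst wmu)//.
apply: (@le_trans _ _ (\int[w]_p (g p.2 + (\1_(~` S) p : R)%:E))%E).
  apply: ge0_le_integral => //.
  - exact: measurableT_comp mf measurable_fst.
  - exact: emeasurable_funD.
  move=> [x y] _ /=; have [Sxy|nSxy] := pselect (S (x, y)).
    by apply: le_trans (fg _ _ Sxy) _; rewrite leeDl.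
  rewrite indicE mem_set// addrC; apply: le_trans (leeDl _ (g0 y)).
  by case/andP: (f01 x).
rewrite ge0_integralD// integral_indic ?setIT//; last exact: measurableC.
by rewrite leeD2l//; exact: measure_setC_le.
Qed.

Lemma clamp01_ge (R : realType) (r s : \bar R) :
  (r <= 1 -> r <= s -> r <= clamp01 s)%E.
Proof.
by move=> r1 rs; rewrite /clamp01 le_min r1 le_max rs orbT.
Qed.

Section integrands.
Context (R : realType) (dX dU dXh dUh : measure_display)
  (X : measurableType dX) (U : measurableType dU)
  (Xh : measurableType dXh) (Uh : measurableType dUh)
  (Y : Type) (dist : Y -> Y -> R) (eps delta : R)
  (t : R.-pker (X * U) ~> X) (th : R.-pker (Xh * Uh) ~> Xh)
  (AP Q : finType) (h : X -> Y) (hh : Xh -> Y) (L : Y -> {set AP})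
  (tau : Q -> {set AP} -> Q) (F : {set Q}) (V : X -> Q -> R)
  (Vh : Xh -> Q -> R) (q : Q).

Local Notation g := (prod_integrand h L tau F V q).
Local Notation opt := (opt_integrand dist eps hh L tau F Vh q).

Lemma indF01 (q' : Q) : 0 <= indF F q' R <= 1.
Proof. by rewrite /indF; case: (q' \in F); rewrite /= ?lexx ?ler01. Qed.

Lemma prod_integrand_ge0 x' : (0 <= g x')%E.
Proof. by rewrite lee_fin le_max; case/andP: (indF01 (tau q (L (h x')))) => ->. Qed.

Lemma prod_integrand_le1 x' : (forall q', V x' q' <= 1) -> (g x' <= 1)%E.
Proof.
move=> V1; rewrite /prod_integrand lee_fin ge_max V1 andbT.
by case/andP: (indF01 (tau q (L (h x')))).
Qed.

Lemma measurable_prod_integrand :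
  (forall a, measurable ((L \o h) @^-1` [set a])) ->
  (forall q', measurable_fun [set: X] (V ^~ q')) -> measurable_fun [set: X] g.
Proof.
move=> mLh mV.
apply: (measurable_fun_finite_select mLh
  (G := fun a x' => (Num.max (indF F (tau q a) R) (V x' (tau q a)))%:E)).
by move=> a; apply/measurable_EFinP; exact: measurable_maxr.
Qed.

Lemma opt_integrand_ge_taubar xh' q' : taubar dist eps hh L tau q xh' q' ->
  ((Num.max (indF F q' R) (Vh xh' q'))%:E <= opt xh')%E.
Proof. by move=> qq'; apply: ereal_sup_ubound; exists q'. Qed.

Lemma opt_integrand_ge0 xh' : (forall y, dist y y <= eps) -> (0 <= opt xh')%E.
Proof.
move=> distyy.
apply: le_trans (opt_integrand_ge_taubar (q' := tau q (L (hh xh'))) _).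
  by rewrite lee_fin le_max; case/andP: (indF01 (tau q (L (hh xh')))) => ->.
by exists (L (hh xh')) => //; exists (hh xh'); first exact: distyy.
Qed.

Lemma prod_integrand_le_opt x' xh' :
  dist (h x') (hh xh') <= eps -> (forall q', V x' q' <= Vh xh' q') ->
  (g x' <= opt xh')%E.
Proof.
move=> hxh VVh.
apply: le_trans (opt_integrand_ge_taubar (q' := tau q (L (h x'))) _).
  by rewrite lee_fin ge_max !le_max lexx VVh orbT.
by exists (L (h x')) => //; exists (h x').
Qed.

Hypotheses (V01 : forall x' q', 0 <= V x' q' <= 1)
  (mg : measurable_fun [set: X] g) (mopt : measurable_fun [set: Xh] opt)
  (dist_refl : forall y, dist y y <= eps).

Lemma integral_prod_integrand_le_Tstar_opt x xh u (P : probability Uh R)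
    (w : {measure set (X * Xh) -> \bar R}) (S : set (X * Xh)) :
  w [set: X * Xh] = 1%E ->
  (forall A, measurable A -> w (A `*` [set: Xh]) = t (x, u) A) ->
  (forall B, measurable B ->
     w ([set: X] `*` B) = \int[P]_uh th (xh, uh) B)%E ->
  measurable S -> ((1 - delta)%:E <= w S)%E ->
  (forall x' xh', S (x', xh') ->
     dist (h x') (hh xh') <= eps /\ forall q', V x' q' <= Vh xh' q') ->
  (\int[t (x, u)]_x' g x' <= Tstar_opt dist eps delta th hh L tau F Vh xh q)%E.
Proof.
move=> w1 wt wth mS wS Srel.
have g0 x' : (0 <= g x')%E := prod_integrand_ge0 x'.
have g1 x' : (g x' <= 1)%E.
  by apply: prod_integrand_le1 => q'; case/andP: (V01 x' q').
have opt0 xh' : (0 <= opt xh')%E by exact: opt_integrand_ge0.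
apply: (@le_trans _ _ (clamp01 (\int[w]_p opt p.2 + delta%:E)))%E.
  apply: clamp01_ge.
    by apply: ge0_integral_le_bound => //; exact: prob_kernel.
  apply: (coupling_integral_le w1 wt mS wS) => //; first by move=> x'; rewrite g0 g1.
  by move=> x' xh' /Srel[hxh VVh]; exact: prod_integrand_le_opt.
rewrite (ge0_integral_snd_mixture wth)//.
by apply: ereal_sup_ubound; exists P.
Qed.

Lemma Tstar_le x (M : \bar R) : (forall u, \int[t (x, u)]_x' g x' <= M)%E ->
  (Tstar t h L tau F V x q <= M)%E.
Proof.
move=> gM; apply: ge_ereal_sup => _ [nu _ <-].
apply: ge0_integral_le_bound gM; first exact: probability_setT.
  by move=> u; apply: integral_ge0 => x' _; exact: prod_integrand_ge0.
exact: measurableT_comp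
  (measurable_fun_integral_kernel (measurable_kernel t) prod_integrand_ge0 mg)
  (pair1_measurable x).
Qed.

End integrands.

Theorem lemma4 (R : realType)
    (dX dU dXh dUh dY : measure_display)
    (X : measurableType dX) (U : measurableType dU)
    (Xh : measurableType dXh) (Uh : measurableType dUh)
    (Y : measurableType dY) (dist : Y -> Y -> R)
    (x0 : X) (t : R.-pker (X * U) ~> X) (h : X -> Y)
    (xh0 : Xh) (th : R.-pker (Xh * Uh) ~> Xh) (hh : Xh -> Y)
    (eps delta : R)
    (Uv : U -> X -> Xh -> probability Uh R)
    (Rel : set (X * Xh)%type)
    (W : R.-pker (U * X * Xh)%type ~> (X * Xh)%type)
    (AP Q : finType) (L : Y -> {set AP})
    (q0 : Q) (tau : Q -> {set AP} -> Q) (F : {set Q})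
    (V : X -> Q -> R) (Vh : Xh -> Q -> R) :
  is_metric dist ->
  measurable_fun [set: _] h -> measurable_fun [set: _] hh ->
  (forall a : {set AP}, measurable (L @^-1` [set a])) ->
  approx_sim dist x0 t h xh0 th hh eps delta Uv Rel W ->
  (forall x q, 0 <= V x q <= 1) ->
  (forall xh q, 0 <= Vh xh q <= 1) ->
  (forall q, measurable_fun [set: _] (V ^~ q)) ->
  (forall q, measurable_fun [set: _] (opt_integrand dist eps hh L tau F Vh q)) ->
  (forall x xh q, Rel (x, xh) -> V x q <= Vh xh q) ->
  forall x xh q, Rel (x, xh) ->
    (Tstar t h L tau F V x q <= Tstar_opt dist eps delta th hh L tau F Vh xh q)%E.
Proof.
move=> metric mh _ mL [mRel Rel0 simRel] V01 _ mV mopt VVh x xh q Rxxh.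
have dist_refl y : dist y y <= eps.
  have [d0 d_eq _ _] := metric; rewrite (d_eq y y).2//.
  exact: le_trans (d0 _ _) (simRel _ _ Rel0).1.
have mg : measurable_fun [set: X] (prod_integrand h L tau F V q).
  apply: measurable_prod_integrand => // a.
  by rewrite -[_ @^-1` _]setTI; exact: mh (mL a).
apply: Tstar_le => // u.
have [tW thW WRel] := (simRel x xh Rxxh).2 u.
apply: (integral_prod_integrand_le_Tstar_opt V01 mg (mopt q) dist_refl _
  tW thW mRel WRel); first exact: prob_kernel.
by move=> x1 xh1 Rx; split; [exact: (simRel _ _ Rx).1 | move=> q1; exact: VVh].
Qed.
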